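(* Let $H$ be a non-null series-parallel graph and let $C:V(H)\to\mathbb{Z}_{\ge 0}$ be a counter for $H$. Then $H$ has an active vertex, i.e., a vertex $v$ with $\deg_H(v)\le 2$ or $\deg_H(v)\le 3C(v)$.
   Context: Graphs are finite, may have parallel edges, but no loops. A graph is series-parallel if it has no subgraph isomorphic to a subdivision of $K_4$. For $v\in V(H)$, $\deg_H(v)$ is the number of edges incident with $v$ (counting parallel edges with multiplicity) and $\mathrm{val}_H(v)$ is the number of distinct neighbors of $v$. A function $C:V(H)\to\mathbb{Z}_{\ge0}$ is a counter for $H$ if $\deg_H(v)-\mathrm{val}_H(v)\le C(v)$ for every $v\in V(H)$. A vertex $v$ is active (with respect to $C$) if $\deg_H(v)\le 2$ or $\deg_H(v)\le 3C(v)$. *)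

From mathcomp Require Import all_boot.
Set Implicit Arguments. Unset Strict Implicit. Unset Printing Implicit Defensive.

(* A finite loopless multigraph on the finite vertex type V is given by a
   multiplicity function m : V -> V -> nat (m u v = number of parallel edges
   between u and v), symmetric and with m v v = 0. *)
Definition multigraph (V : finType) (m : V -> V -> nat) : Prop :=
  (forall u v, m u v = m v u) /\ (forall v, m v v = 0).

Definition adj (V : finType) (m : V -> V -> nat) : rel V := fun u v => 0 < m u v.

Definition deg (V : finType) (m : V -> V -> nat) (v : V) : nat := \sum_(u : V) m v u.

Definition valn (V : finType) (m : V -> V -> nat) (v : V) : nat :=
  #|[set u : V | adj m v u]|.

(* H contains a subgraph isomorphic to a subdivision of K4: four distinct
   branch vertices b 0..b 3, and for each pair i < j a path from b i to b j
   (with interior vertex sequence P i j), the paths having no branch vertex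
   in their interiors and pairwise disjoint interiors. *)
Definition has_K4_subdivision (V : finType) (m : V -> V -> nat) : Prop :=
  exists (b : 'I_4 -> V) (P : 'I_4 -> 'I_4 -> seq V),
    injective b /\
    (forall i j : 'I_4, i < j ->
       [/\ path (adj m) (b i) (rcons (P i j) (b j)),
           uniq (P i j) &
           forall x, x \in P i j -> x \notin codom b]) /\
    (forall i j k l : 'I_4, i < j -> k < l -> (i, j) != (k, l) ->
       [disjoint P i j & P k l]).

Definition series_parallel (V : finType) (m : V -> V -> nat) : Prop :=
  ~ has_K4_subdivision m.

Definition counter (V : finType) (m : V -> V -> nat) (C : V -> nat) : Prop :=
  forall v, deg m v - valn m v <= C v.

Definition active (V : finType) (m : V -> V -> nat) (C : V -> nat) (v : V) : bool :=
  (deg m v <= 2) || (deg m v <= 3 * C v).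

From mathcomp Require Import all_boot zify.

(* If no vertex is active, then every vertex has deg > 2 and
   deg > 3 C >= 3 (deg - val), so val > 2 deg / 3 > 2: the simple graph
   underlying H has minimum degree at least 3, and by a theorem of Dirac it
   contains a subdivision of K4.  For Dirac's theorem take a longest path; all
   neighbours of its end a lie on it, so it reads a p z y q with a chord a y,
   and we choose such a configuration with p as short as possible.  Reversing
   a p z gives another one, z (rev p) a y q, with the same p, so by minimality
   neither a nor z has a neighbour inside p z, resp. (rev p) a.  Hence their
   third neighbours b and d lie on q, and the chords a y, a b, z d together
   with the path form a subdivided K4. *)

Set Implicit Arguments.
Unset Strict Implicit.
Unset Printing Implicit Defensive.

Ltac perm_by_count :=
  apply/permP; intros f; do ! rewrite /= (count_cat, count_rev); rewrite /=; clear - f; lia.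

Lemma mem_behead_split (T : eqType) (w : T) (s : seq T) :
  w \in behead s -> exists p z r, s = p ++ z :: w :: r.
Proof.
case: s => //= x s /splitPr [p r].
by exists (belast x p), (last x p), r; rewrite -cat_cons [x :: p]lastI cat_rcons.
Qed.

Section Dirac.
Variables (V : finType) (m : V -> V -> nat).

Lemma K4_subdivision_of_chorded_path u0 s1 u1 s2 u2 s3 u3 :
  uniq (u0 :: s1 ++ u1 :: s2 ++ u2 :: s3 ++ [:: u3]) ->
  path (adj m) u0 (s1 ++ u1 :: s2 ++ u2 :: s3 ++ [:: u3]) ->
  adj m u0 u2 -> adj m u0 u3 -> adj m u1 u3 -> has_K4_subdivision m.
Proof.
set us := [:: u0; u1; u2; u3]; set ss := [:: s1; s2; s3].
have perm_us : perm_eq (u0 :: s1 ++ u1 :: s2 ++ u2 :: s3 ++ [:: u3]) (us ++ flatten ss).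
  by perm_by_count.
rewrite (perm_uniq perm_us) cat_uniq => /and3P [us_uniq /hasPn ss_us ss_uniq].
move: (ss_uniq); rewrite /= cats0 !cat_uniq has_cat negb_or -!disjoint_has.
move=> /and5P [uniq1 /andP [d21 d31] uniq2 d32 uniq3].
rewrite cats1 -!cat_rcons !cat_path !last_rcons => /and3P [path1 path2 path3] a02 a03 a13.
pose b i := nth u0 us (i : 'I_4).
pose P (i j : 'I_4) := if j == i.+1 :> nat then nth [::] ss i else [::].
have P_flatten i j : {subset P i j <= flatten ss}.
  move=> x; rewrite /P; case: ifP => // _.
  by case: (val i) => [|[|[|k]]] /=; rewrite ?nth_nil ?mem_cat => // ->; rewrite ?orbT.
have b_us i : b i \in us by apply: mem_nth; rewrite (ltn_ord i).
exists b, P; split; [|split].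
- move=> i j /(congr1 (index^~ us)); rewrite !index_uniq //.
  exact: val_inj.
- move=> i j lt_ij; split.
  + move: i j lt_ij; rewrite /P /b.
    by move=> [[|[|[|[|i]]]] ?] [[|[|[|[|j]]]] ?] //= _; rewrite ?andbT.
  + rewrite /P; case: ifP => // _.
    by case: (val i) => [|[|[|k]]]; rewrite /= ?nth_nil.
  + move=> x /P_flatten /ss_us x_us; apply/codomP => -[k x_bk].
    by move: x_us; rewrite x_bk b_us.
have disj_ss k l : k < 3 -> l < 3 -> k != l -> [disjoint nth [::] ss k & nth [::] ss l].
  by case: k l => [|[|[|k]]] [|[|[|l]]] //= _ _ _; rewrite disjoint_sym.
move=> i j k l _ _ ne; rewrite /P.
case: eqP => [ji | _]; last by rewrite disjoint_has.
case: eqP => [lk | _]; last by rewrite disjoint_sym disjoint_has.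
apply: disj_ss; [by rewrite -ltnS -ji | by rewrite -ltnS -lk |].
by apply: contra ne => /eqP ik; rewrite xpair_eqE -!val_eqE /= ji lk ik !eqxx.
Qed.

Hypothesis m_graph : multigraph m.

Lemma adjC u v : adj m u v = adj m v u.
Proof. by rewrite /adj (proj1 m_graph). Qed.

Lemma adj_irr v : adj m v v = false.
Proof. by rewrite /adj (proj2 m_graph). Qed.

Lemma path_adj_rcons_rev x p z :
  path (adj m) x (rcons p z) = path (adj m) z (rcons (rev p) x).
Proof.
have := rev_path (adj m) x (rcons p z).
rewrite last_rcons belast_rcons rev_cons => ->.
by apply: eq_path => u v; rewrite adjC.
Qed.

Definition simple_path x t := uniq (x :: t) && path (adj m) x t.

Lemma K4_subdivision_of_crossing_chords a p z y q1 c q2 d :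
  simple_path a (p ++ z :: y :: q1 ++ c :: q2) ->
  adj m a y -> adj m a c -> adj m z d -> d \in c :: q2 -> has_K4_subdivision m.
Proof.
move=> /andP [apq_uniq apq_path] ay ac zd d_in.
have [q3 [q4 [q2_eq last_d]]] : exists q3 q4, q2 = q3 ++ q4 /\ last c q3 = d.
  case/predU1P: d_in => [<-|/splitPr [r1 r2]]; first by exists [::], q2.
  by exists (rcons r1 d), r2; rewrite cat_rcons last_rcons.
subst q2; move: apq_path.
rewrite -cat_rcons cat_path last_rcons path_adj_rcons_rev /= !cat_path /= cat_path.
move=> /and5P [path_zpa zy path_yq1 q1c /andP [path_cq3 _]].
apply: (@K4_subdivision_of_chorded_path y q1 c q3 z (rev p) a).
- have perm_apq : perm_eq (a :: p ++ z :: y :: q1 ++ c :: q3 ++ q4)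
                         ((y :: q1 ++ c :: q3 ++ z :: rev p ++ [:: a]) ++ q4).
    by perm_by_count.
  by move: apq_uniq; rewrite (perm_uniq perm_apq) cat_uniq => /andP [].
- by rewrite cats1 /= !cat_path /= path_yq1 q1c !cat_path /= path_cq3 last_d adjC zd.
- by rewrite adjC.
- by rewrite adjC.
- by rewrite adjC.
Qed.

Lemma longest_simple_path_exists (x0 : V) :
  exists x t, simple_path x t /\ forall x' t', simple_path x' t' -> size t' <= size t.
Proof.
pose has_path n := [exists x, exists t : n.-tuple V, simple_path x t].
have has_path0 : exists n, has_path n.
  by exists 0; apply/existsP; exists x0; apply/existsP; exists [tuple].
have has_path_le n : has_path n -> n <= #|V|.
  case/existsP => x /existsP [t /andP [xt_uniq _]].
  by have := max_card (mem (x :: t)); rewrite (card_uniqP xt_uniq) /= size_tuple => /ltnW.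
case: (ex_maxnP has_path0 has_path_le) => L /existsP [x /existsP [t xt]] L_max.
exists x, t; split=> // x' t' x't'; rewrite size_tuple; apply: L_max.
by apply/existsP; exists x'; apply/existsP; exists (in_tuple t').
Qed.

Hypothesis valn_gt2 : forall v, 2 < valn m v.

Lemma third_nbr v a b : exists2 u, adj m v u & (u != a) && (u != b).
Proof.
have : ~~ ([set u | adj m v u] \subset [set a; b]).
  apply: contraL (valn_gt2 v) => /subset_leq_card; rewrite cards2 -leqNgt => le_ab.
  by apply: leq_trans le_ab _; case: (a != b).
by case/subsetPn => u; rewrite !inE negb_or; exists u.
Qed.

Section LongestPath.

Variable L : nat.
Hypothesis simple_path_size_le : forall x t, simple_path x t -> size t <= L.

Lemma nbr_on_longest_path x t v : simple_path x t -> size t = L -> adj m x v -> v \in t.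
Proof.
move=> /andP [xt_uniq xt_path] t_L xv; apply: contraT => v_t.
have v_xt : v \notin x :: t.
  by rewrite in_cons negb_or v_t andbT; apply: contraTneq xv => ->; rewrite adj_irr.
have := @simple_path_size_le v (x :: t).
by rewrite /simple_path cons_uniq v_xt xt_uniq /= adjC xv xt_path t_L ltnn => /(_ isT).
Qed.

Definition longest_with_chord a p z y q : Prop :=
  [/\ simple_path a (p ++ z :: y :: q), size (p ++ z :: y :: q) = L & adj m a y].

Lemma longest_with_chord_rev a p z y q :
  longest_with_chord a p z y q -> longest_with_chord z (rev p) a y q.
Proof.
case=> /andP [apq_uniq apq_path] apq_L ay.
move: apq_path; rewrite -cat_rcons cat_path last_rcons path_adj_rcons_rev /=.
move=> /and3P [path_zpa zy path_yq]; split.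
- apply/andP; split; last by rewrite -cat_rcons cat_path last_rcons path_zpa /= ay.
  by rewrite (perm_uniq (_ : perm_eq _ (a :: p ++ z :: y :: q))) //; perm_by_count.
- by rewrite -apq_L !size_cat size_rev.
- by [].
Qed.

Lemma longest_with_chord_shorter a p z y q w :
  longest_with_chord a p z y q -> w \in behead (rcons p z) -> adj m a w ->
  exists p' z' q', longest_with_chord a p' z' w q' /\ size p' < size p.
Proof.
move=> [apq_simple apq_L _] /mem_behead_split [p' [z' [r pz]]] aw.
have apq : p ++ z :: y :: q = p' ++ z' :: w :: r ++ y :: q by rewrite -cat_rcons pz -catA.
exists p', z', (r ++ y :: q); split; first by split; rewrite -?apq.
by move/(congr1 size): pz; rewrite size_rcons size_cat /=; lia.
Qed.

Lemma longest_with_chord_nbr a p z y q w :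
  longest_with_chord a p z y q -> {in behead (rcons p z), forall u, ~~ adj m a u} ->
  adj m a w -> (w != head z p) && (w != y) -> w \in q.
Proof.
move=> [apq_simple apq_L _] a_min aw /andP [w_succ w_y].
have := nbr_on_longest_path apq_simple apq_L aw.
rewrite -cat_rcons mem_cat !in_cons (negbTE w_y) /= => /orP [w_pz|//].
have w_mid : w \in behead (rcons p z).
  case: p w_pz w_succ {a_min apq_simple apq_L} => [|x p] /=;
  by rewrite in_cons => /predU1P [->|]; rewrite ?eqxx.
by have := a_min w w_mid; rewrite aw.
Qed.

Lemma K4_subdivision_of_longest_with_chord a p z y q :
  longest_with_chord a p z y q -> has_K4_subdivision m.
Proof.
have [n] := ubnP (size p); elim: n a p z y q => // n IHn a p z y q /ltnSE p_le ch.
have shorter_K4 a' p' z' y' q' w : size p' = size p ->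
    longest_with_chord a' p' z' y' q' -> w \in behead (rcons p' z') -> adj m a' w ->
    has_K4_subdivision m.
  move=> p'_p ch' w_mid a'w.
  have [p'' [z'' [q'' [ch'' lt_p'']]]] := longest_with_chord_shorter ch' w_mid a'w.
  by apply: IHn ch''; apply: leq_trans lt_p'' _; rewrite p'_p.
have ch_rev := longest_with_chord_rev ch.
have [/hasP [w w_mid aw] | /hasPn a_min] := boolP (has (adj m a) (behead (rcons p z))).
  exact: shorter_K4 ch w_mid aw.
have [/hasP [w w_mid zw] | /hasPn z_min] := boolP (has (adj m z) (behead (rcons (rev p) a))).
  exact: shorter_K4 (size_rev p) ch_rev w_mid zw.
have [b ab b_new] := third_nbr a (head z p) y.
have [d zd d_new] := third_nbr z (head a (rev p)) y.
have b_q := longest_with_chord_nbr ch a_min ab b_new.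
have d_q := longest_with_chord_nbr ch_rev z_min zd d_new.
case/splitPr: b_q ch ch_rev d_q => q1 q2 ch ch_rev.
rewrite mem_cat => /orP [d_early | d_late].
- case/splitPr: d_early ch_rev => r1 r2 [zpq_simple _ zy].
  rewrite -catA /= in zpq_simple.
  apply: (K4_subdivision_of_crossing_chords zpq_simple zy zd ab).
  by rewrite in_cons mem_cat mem_head !orbT.
- have [apq_simple _ ay] := ch.
  exact: K4_subdivision_of_crossing_chords apq_simple ay ab zd d_late.
Qed.

End LongestPath.

Theorem K4_subdivision_of_valn_gt2 : 0 < #|V| -> has_K4_subdivision m.
Proof.
case/card_gt0P => x0 _; have [x [t [xt_simple t_max]]] := longest_simple_path_exists x0.
have [y xy /andP [y_succ _]] := third_nbr x (head x t) x.
have /mem_behead_split [p [z [q t_eq]]] : y \in behead t.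
  move: (nbr_on_longest_path t_max xt_simple erefl xy) y_succ.
  by case: (t) => //= c t'; rewrite in_cons => /predU1P [->|]; rewrite ?eqxx.
apply: (K4_subdivision_of_longest_with_chord t_max (a := x) (p := p) (z := z) (y := y) (q := q)).
by split; rewrite -?t_eq.
Qed.

End Dirac.

Lemma valn_gt2_of_inactive (V : finType) (m : V -> V -> nat) (C : V -> nat) v :
  counter m C -> ~~ active m C v -> 2 < valn m v.
Proof. by move=> /(_ v); rewrite /active negb_or -!ltnNge; lia. Qed.

Theorem lemma7 (V : finType) (m : V -> V -> nat) (C : V -> nat) :
  multigraph m -> 0 < #|V| -> series_parallel m -> counter m C ->
  exists v : V, active m C v.
Proof.
move=> m_graph V_gt0 m_sp C_counter.
have [v v_active | inactive] := pickP (active m C); first by exists v.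
case: m_sp; apply: K4_subdivision_of_valn_gt2 => // v.
by apply: valn_gt2_of_inactive C_counter _; rewrite inactive.
Qed.
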